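(* Let $G$ be a finite abelian group and $\{a,b\}$ a $2$-element generating set of $G$ with $a$ and $b$ nontrivial. If the subgroup $\langle a-b\rangle$ has even index in $G$, then $\mathrm{Cay}(G;a,b)$ has two arc-disjoint hamiltonian paths.
   Context: For an abelian group $G$ and $a,b\in G$, the Cayley digraph $\mathrm{Cay}(G;a,b)$ has vertex set $G$ and an arc from $v$ to $v+s$ for every $v\in G$ and $s\in\{a,b\}$. A hamiltonian path is a directed path visiting every vertex exactly once; arc-disjoint means sharing no arc. *)

From HB Require Import structures.
From mathcomp Require Import all_boot all_order all_algebra all_fingroup.
Set Implicit Arguments. Unset Strict Implicit. Unset Printing Implicit Defensive.
Import GRing.Theory.
Local Open Scope ring_scope.

(* A finite abelian group is a finZmodType G (written additively). *)

Definition cay_arc (G : finZmodType) (a b : G) (v w : G) : bool :=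
  (w == v + a) || (w == v + b).

Definition arcs (G : finZmodType) (p : seq G) : seq (G * G) :=
  zip p (behead p).

Definition ham_path (G : finZmodType) (a b : G) (p : seq G) : Prop :=
  [/\ uniq p, size p = #|G| & all (fun e => cay_arc a b e.1 e.2) (arcs p)].

Definition arc_disjoint (G : finZmodType) (p q : seq G) : Prop :=
  forall e, e \in arcs p -> e \notin arcs q.

From HB Require Import structures.
From mathcomp Require Import all_boot all_order all_algebra all_fingroup.
From mathcomp Require Import cyclic zify.
Set Implicit Arguments. Unset Strict Implicit. Unset Printing Implicit Defensive.
Import GRing.Theory.

(* Let e = b - a, let H = <[e]> have even index m = 2W+2 and order n, and let
   y = (W+1)(a+b).  Every element of G is uniquely a *+ r + h with r < m and h in H.
   The first path is a zigzag of n rows of m steps: W steps b, W+1 steps a and a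
   last step b, except that this last step is a at the end of every n'-th row,
   where n' = #[y].  Row q then starts at y *+ q - e *+ (q %/ n'); as y lies in H,
   the index g = n / n' of <[y]> in H bounds q %/ n' and these starts are distinct,
   so the zigzag is hamiltonian.  The second path is the same zigzag with a and b
   exchanged, translated by (a - b) *+ g.  Where the two paths meet they are in the
   same column r, so their steps differ unless r = m - 1; in that column the
   translation forces the two row indices to agree modulo n', and the steps differ
   again. *)

Lemma ltn_div2r_dvd (d n q : nat) : 0 < d -> d %| n -> q < n -> q %/ d < n %/ d.
Proof. by move=> d_gt0 dvd_dn; rewrite ltn_divLR // divnK. Qed.

Lemma divn_modnS (t m : nat) : (t %% m).+1 < m ->
  t.+1 %/ m = t %/ m /\ t.+1 %% m = (t %% m).+1.
Proof.
move=> lt_r; have m_gt0 : 0 < m by apply: leq_ltn_trans lt_r.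
have -> : t.+1 = t %/ m * m + (t %% m).+1 by rewrite {1}(divn_eq t m) addnS.
by rewrite divnMDl // modnMDl (divn_small lt_r) (modn_small lt_r) addn0.
Qed.

Lemma divn_modnS_wrap (t m : nat) : (t %% m).+1 = m ->
  t.+1 %/ m = (t %/ m).+1 /\ t.+1 %% m = 0.
Proof.
move=> r_last; have m_gt0 : 0 < m by rewrite -r_last.
have -> : t.+1 = (t %/ m).+1 * m by rewrite {1}(divn_eq t m) -addnS r_last mulSn addnC.
by rewrite mulnK // modnMl.
Qed.

Lemma addSn_eq_mod_self (g s s' : nat) : s < g -> s' < g ->
  g = s'.+1 + s %[mod g] -> s'.+1 + s = g.
Proof.
move=> lt_s lt_s'; rewrite modnn; case: (ltnP (s'.+1 + s) g) => [lt_x | le_gx].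
  by rewrite modn_small.
by rewrite -(subnKC le_gx) modnDl modn_small; lia.
Qed.

Local Open Scope ring_scope.

Lemma subr_eq_addr (G : zmodType) (x y z w : G) : x - y = z - w -> x + w = z + y.
Proof. by move=> E; rewrite -[x](subrK y) E addrAC subrK. Qed.

Section CyclicShift.
Variable G : finZmodType.

Lemma cycle_subrC (a b : G) : <[a - b]>%g = <[b - a]>%g.
Proof. by rewrite -cycleV FinRing.zmodVgE opprB. Qed.

Lemma groupD (H : {group G}) (x y : G) : x \in H -> y \in H -> x + y \in H.
Proof. exact: groupM. Qed.

Lemma groupN (H : {group G}) (x : G) : (- x \in H) = (x \in H).
Proof. exact: groupV. Qed.

Lemma groupB (H : {group G}) (x y : G) : x \in H -> y \in H -> x - y \in H.
Proof. by move=> Hx Hy; rewrite groupD ?groupN. Qed.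

Lemma groupMn (H : {group G}) (x : G) (n : nat) : x \in H -> x *+ n \in H.
Proof. exact: groupX. Qed.

Lemma eq_mulrn_mod_order (x : G) (i j : nat) :
  (x *+ i == x *+ j) = (i == j %[mod #[x]%g]).
Proof. exact: eq_expg_mod_order. Qed.

Lemma subcycle_shift_mod (x y : G) (q q' i j : nat) :
  y \in <[x]>%g -> y *+ q + x *+ i = y *+ q' + x *+ j ->
  i = j %[mod #[x] %/ #[y]]%g.
Proof.
case/cycleP => p ->; rewrite orderXgcd FinRing.zmodXgE -!mulrnA -!mulrnDr.
move/eqP; rewrite eq_mulrn_mod_order => /eqP.
set n := #[x]%g; set g := gcdn n p.
have gn : (g %| n)%N by apply: dvdn_gcdl.
have gp : (g %| p)%N by apply: dvdn_gcdr.
rewrite divnA // mulKn ?gcdn_gt0 ?order_gt0 // => /(congr1 (modn^~ g)).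
by rewrite !modn_dvdm // -(divnK gp) !(mulnAC _ g) !modnMDl.
Qed.

End CyclicShift.

Lemma mulrn_in_cycle_subr (G : finZmodType) (a b : G) (r : nat) :
  <<[set a; b]>>%g = [set: G] ->
  (a *+ r \in <[b - a]>%g) = (#|[set: G] : <[(b - a)%R]>|%g %| r)%N.
Proof.
move=> gen; pose H := <[b - a]>%G.
have nH : ([set: G] \subset 'N(H))%g.
  exact: sub_abelian_norm (FinRing.zmod_abelian _) (subsetT _).
have nHx (x : G) : (x \in 'N(H))%g := subsetP nH x (in_setT x).
have Hb : coset H b = coset H a.
  by rewrite -[b](subrK a) -FinRing.zmodMgE coset_kerl // cycle_id.
have quo_cycle : ([set: G] / H)%g = <[coset H a]>%g.
  rewrite -gen quotient_gen ?(subset_trans (subsetT _) nH) //.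
  by rewrite quotientU !quotient_set1 // Hb setUid.
rewrite -card_quotient // quo_cycle -orderE order_dvdn -morphX //=.
by apply/idP/eqP => [/coset_id | /coset_idr]; apply.
Qed.

Section CayleyWalks.
Variables (G : finZmodType) (a b : G).

Lemma arcs_map_iota (f : nat -> G) (k N : nat) :
  arcs [seq f i | i <- iota k N] = [seq (f i, f i.+1) | i <- iota k N.-1].
Proof. by elim: N k => [|[|N] IH] k //=; rewrite /arcs /= in IH *; rewrite IH. Qed.

Lemma ham_path_walk (f : nat -> G) (d : nat -> bool) :
  (forall t, f t.+1 = f t + (if d t then b else a)) ->
  (forall t t', (t < #|G|)%N -> (t' < #|G|)%N -> f t = f t' -> t = t') ->
  ham_path a b [seq f t | t <- iota 0 #|G|].
Proof.
move=> fS f_inj; split; last 1 first.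
- rewrite arcs_map_iota; apply/allP => _ /mapP [t _ ->] /=.
  by rewrite /cay_arc fS; case: (d t); rewrite eqxx ?orbT.
- by rewrite map_inj_in_uniq ?iota_uniq // => t t'; rewrite !mem_iota; apply: f_inj.
by rewrite size_map size_iota.
Qed.

Lemma arc_disjoint_walks (f1 f2 : nat -> G) (d1 d2 : nat -> bool) (N : nat) :
  a != b ->
  (forall t, f1 t.+1 = f1 t + (if d1 t then b else a)) ->
  (forall t, f2 t.+1 = f2 t + (if d2 t then b else a)) ->
  (forall t t', (t < N)%N -> (t' < N)%N -> f1 t = f2 t' -> d1 t != d2 t') ->
  arc_disjoint [seq f1 t | t <- iota 0 N] [seq f2 t | t <- iota 0 N].
Proof.
move=> neq_ab f1S f2S meet [v w]; rewrite !arcs_map_iota.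
case/mapP => t; rewrite mem_iota => /andP [_ lt_t] [-> ->].
apply/mapP => -[t']; rewrite mem_iota => /andP [_ lt_t'] [E1].
rewrite f1S f2S E1 => /addrI; apply/eqP.
have := meet t t' (leq_trans lt_t (leq_pred _)) (leq_trans lt_t' (leq_pred _)) E1.
by case: (d1 t); case: (d2 t') => //= _; rewrite // eq_sym.
Qed.

End CayleyWalks.

Section ZigzagWalk.
Variables (G : zmodType) (a b : G) (W n' : nat).

Definition zigzag_row (q : nat) : G :=
  (a + b) *+ W.+1 *+ q - (b - a) *+ (q %/ n')%N.

Definition zigzag_col (r : nat) : G := b *+ minn r W + a *+ (r - W).

Definition zigzag (t : nat) : G :=
  zigzag_row (t %/ W.*2.+2)%N + zigzag_col (t %% W.*2.+2)%N.

Definition zigzag_dir (t : nat) : bool :=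
  let r := (t %% W.*2.+2)%N in
  if (r < W)%N then true else if (r < W.*2.+1)%N then false
  else ~~ (n' %| (t %/ W.*2.+2).+1)%N.

Lemma zigzag_colE (r : nat) : zigzag_col r = a *+ r + (b - a) *+ minn r W.
Proof.
have -> : a *+ r = a *+ minn r W + a *+ (r - W).
  by rewrite -mulrnDr; congr (_ *+ _); lia.
by rewrite /zigzag_col addrAC -mulrnDl subrKC.
Qed.

Lemma zigzag_colS (r : nat) :
  zigzag_col r.+1 = zigzag_col r + (if (r < W)%N then b else a).
Proof.
rewrite /zigzag_col; case: ltnP => r_W.
  have [-> -> ->] : [/\ minn r.+1 W = r.+1, (r.+1 - W = 0)%N & (r - W = 0)%N] by split; lia.
  by rewrite mulrSr addrAC.
have [-> ->] : minn r.+1 W = W /\ (r.+1 - W = (r - W).+1)%N by lia.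
by rewrite mulrSr addrA.
Qed.

Lemma zigzag_col_last : zigzag_col W.*2.+1 = b *+ W + a *+ W.+1.
Proof. by rewrite /zigzag_col; congr (_ *+ _ + _ *+ _); lia. Qed.

Lemma zigzag_row_last (q : nat) : (0 < n')%N ->
  zigzag_row q.+1 = zigzag_row q + zigzag_col W.*2.+1 + (if (n' %| q.+1)%N then a else b).
Proof.
move=> n'_gt0.
have col_last : (a + b) *+ W.+1 = zigzag_col W.*2.+1 + b.
  by rewrite zigzag_col_last mulrnDl (mulrSr b) addrA [b *+ W + _]addrC.
rewrite {1}/zigzag_row divnS // addnC mulrnDr opprD mulrSr addrACA -/(zigzag_row q).
rewrite col_last -[RHS]addrA -[_ + b - _]addrA; congr (_ + (_ + _)).
by case: (n' %| q.+1)%N; rewrite /= ?mulr1n ?mulr0n ?subr0 ?subKr.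
Qed.

Lemma zigzagS (t : nat) : (0 < n')%N ->
  zigzag t.+1 = zigzag t + (if zigzag_dir t then b else a).
Proof.
move=> n'_gt0; rewrite /zigzag /zigzag_dir.
have r_lt : (t %% W.*2.+2 < W.*2.+2)%N by rewrite ltn_pmod.
case: (ltnP (t %% W.*2.+2) W.*2.+1) => r_col.
  have [-> ->] := @divn_modnS t W.*2.+2 r_col.
  by rewrite zigzag_colS addrA; case: (_ < W)%N.
have r_last : (t %% W.*2.+2).+1 = W.*2.+2 by lia.
have [-> ->] := divn_modnS_wrap r_last.
have -> : (t %% W.*2.+2 = W.*2.+1)%N by lia.
have -> : (W.*2.+1 < W)%N = false by lia.
by rewrite zigzag_row_last // /zigzag_col min0n sub0n !mulr0n !addr0 if_neg.
Qed.

End ZigzagWalk.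

Lemma zigzag_row_swap (G : zmodType) (a b : G) (W n' q q' g : nat) :
  zigzag_row a b W n' q + zigzag_col a b W W.*2.+1 =
    (a - b) *+ g + (zigzag_row b a W n' q' + zigzag_col b a W W.*2.+1) ->
  (a + b) *+ W.+1 *+ q + (b - a) *+ g =
    (a + b) *+ W.+1 *+ q' + (b - a) *+ ((q' %/ n').+1 + q %/ n').
Proof.
rewrite !zigzag_col_last /zigzag_row [b + a]addrC -[a - b]opprB !mulNrn opprK.
set K := b *+ W + a *+ W.+1; set e := b - a.
have -> : a *+ W + b *+ W.+1 = K + e.
  by apply/esym; rewrite /K /e -!addrA (mulrSr a) -addrA subrKC addrCA -mulrSr.
rewrite [X in _ = X]addrA [X in _ = X]addrA addrAC => /addIr E.
rewrite mulrnDr mulrSr 2!addrA; apply: subr_eq_addr.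
by rewrite E -[LHS]addrA [LHS]addrC.
Qed.

Section ZigzagInjective.
Variables (G : finZmodType) (a b : G) (W : nat).
Hypothesis gen : <<[set a; b]>>%g = [set: G].
Hypothesis index : #|[set: G] : <[b - a]>|%g = W.*2.+2.

Let y := (a + b) *+ W.+1.
Let n' := #[y]%g.

Lemma card_index_mul_order : #|G| = (W.*2.+2 * #[(b - a)%R]%g)%N.
Proof. by rewrite -index -cardsT -(Lagrange (subsetT <[b - a]>%G)) mulnC. Qed.

Lemma mulrn_coset_inj (u : G) (r r' : nat) : (r < W.*2.+2)%N -> (r' < W.*2.+2)%N ->
  u - a *+ r \in <[b - a]>%g -> u - a *+ r' \in <[b - a]>%g -> r = r'.
Proof.
wlog le_r'r : r r' / (r' <= r)%N => [sym | lt_r _].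
  move=> lt_r lt_r' Hr Hr'; case: (leqP r' r) => [|/ltnW] le; first exact: sym.
  exact/esym/sym.
move=> Hr Hr'; have : a *+ (r - r') \in <[b - a]>%g.
  have -> : a *+ (r - r') = (u - a *+ r') - (u - a *+ r).
    by rewrite mulrnBr // opprB [RHS]addrC subrKA.
  exact: groupB.
rewrite mulrn_in_cycle_subr // index => /dvdn_leq; lia.
Qed.

Lemma row_shift_in_cycle : y \in <[b - a]>%g.
Proof.
have -> : y = a *+ W.*2.+2 + (b - a) *+ W.+1.
  by rewrite -doubleS -mul2n mulrnA -mulrnDl mulr2n -addrA subrKC.
apply: groupD; last exact/groupMn/cycle_id.
by rewrite mulrn_in_cycle_subr // index.
Qed.

Lemma zigzag_sub_in_cycle (n t : nat) :
  zigzag a b W n t - a *+ (t %% W.*2.+2)%N \in <[b - a]>%g.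
Proof.
rewrite /zigzag zigzag_colE addrCA [a *+ _ + _]addrC addrK /zigzag_row.
by apply: groupD; [apply: groupB|]; apply: groupMn; rewrite ?cycle_id ?row_shift_in_cycle.
Qed.

Lemma zigzag_inj (t t' : nat) : (t < #|G|)%N -> (t' < #|G|)%N ->
  zigzag a b W n' t = zigzag a b W n' t' -> t = t'.
Proof.
rewrite card_index_mul_order mulnC -!ltn_divLR // => lt_q lt_q' E.
have m_gt0 : (0 < W.*2.+2)%N by [].
have lt_r := ltn_pmod t m_gt0; have lt_r' := ltn_pmod t' m_gt0.
have eq_r : (t %% W.*2.+2 = t' %% W.*2.+2)%N.
  by apply: (mulrn_coset_inj (u := zigzag a b W n' t)) => //; last rewrite E;
    exact: zigzag_sub_in_cycle.
move: E; rewrite /zigzag -eq_r => /addIr; rewrite /zigzag_row => /subr_eq_addr E.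
set q := (t %/ _)%N in lt_q E; set q' := (t' %/ _)%N in lt_q' E.
have n'_gt0 : (0 < n')%N by apply: order_gt0.
have n'_dvd : (n' %| #[(b - a)%R]%g)%N := order_dvdG row_shift_in_cycle.
have eq_s : (q %/ n' = q' %/ n')%N.
  have := subcycle_shift_mod (row_shift_in_cycle) E.
  by rewrite !modn_small ?ltn_div2r_dvd.
move: E; rewrite eq_s => /addIr /eqP; rewrite eq_mulrn_mod_order -/n' => /eqP eq_q.
rewrite (divn_eq t W.*2.+2) (divn_eq t' W.*2.+2) -/q -/q'.
by rewrite (divn_eq q n') (divn_eq q' n') eq_s eq_q eq_r.
Qed.

End ZigzagInjective.

Section ZigzagPaths.
Variables (G : finZmodType) (a b : G) (W : nat).
Hypothesis gen : <<[set a; b]>>%g = [set: G].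
Hypothesis index : #|[set: G] : <[b - a]>|%g = W.*2.+2.

Let gen_ba : <<[set b; a]>>%g = [set: G].
Proof. by rewrite setUC. Qed.

Let index_ba : #|[set: G] : <[a - b]>|%g = W.*2.+2.
Proof. by rewrite cycle_subrC. Qed.

Let n' := #[(a + b) *+ W.+1]%g.
Let g := (#[(b - a)%R]%g %/ n')%N.

Let n'_gt0 : (0 < n')%N. Proof. exact: order_gt0. Qed.

Lemma zigzag_meet_col (t t' : nat) :
  zigzag a b W n' t = (a - b) *+ g + zigzag b a W n' t' ->
  (t %% W.*2.+2 = t' %% W.*2.+2)%N.
Proof.
move=> E; apply: (mulrn_coset_inj gen index (u := zigzag a b W n' t)); rewrite ?ltn_pmod //.
  exact: zigzag_sub_in_cycle.
rewrite E; set z := zigzag b a W n' t'; set r' := (t' %% _)%N.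
have -> : (a - b) *+ g + z - a *+ r' = (a - b) *+ g + (z - b *+ r') + (b - a) *+ r'.
  by rewrite (mulrnBl r') -[RHS]addrA subrKA [RHS]addrA.
apply: groupD; last exact/groupMn/cycle_id.
apply: groupD; first by apply: groupMn; rewrite -opprB groupN cycle_id.
by have := zigzag_sub_in_cycle gen_ba index_ba n' t'; rewrite cycle_subrC.
Qed.

Lemma zigzag_meet_last_col (t t' : nat) : (t < #|G|)%N -> (t' < #|G|)%N ->
  (t %% W.*2.+2 = W.*2.+1)%N -> (t' %% W.*2.+2 = W.*2.+1)%N ->
  zigzag a b W n' t = (a - b) *+ g + zigzag b a W n' t' ->
  (t %/ W.*2.+2 = t' %/ W.*2.+2 %[mod n'])%N.
Proof.
rewrite (card_index_mul_order index) mulnC -!ltn_divLR // /zigzag => lt_q lt_q' -> ->.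
move=> /zigzag_row_swap; set y := _ *+ W.+1; set q := (t %/ _)%N; set q' := (t' %/ _)%N.
have n'_dvd : (n' %| #[(b - a)%R]%g)%N := order_dvdG (row_shift_in_cycle gen index).
have y_in : y \in <[b - a]>%g := row_shift_in_cycle gen index.
move=> E; have /addSn_eq_mod_self eq_g := subcycle_shift_mod y_in E.
move: E; rewrite eq_g ?ltn_div2r_dvd // => /addIr /eqP.
by rewrite eq_mulrn_mod_order => /eqP.
Qed.

Lemma zigzag_meet_dir (t t' : nat) : (t < #|G|)%N -> (t' < #|G|)%N ->
  zigzag a b W n' t = (a - b) *+ g + zigzag b a W n' t' ->
  zigzag_dir W n' t = zigzag_dir W n' t'.
Proof.
move=> lt_t lt_t' E; have eq_r := zigzag_meet_col E.
rewrite /zigzag_dir -eq_r; case: ifP => // _.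
case: ifP => // /negbT; rewrite -leqNgt => r_last.
have {}r_last : (t %% W.*2.+2 = W.*2.+1)%N by have := ltn_pmod t (isT : 0 < W.*2.+2)%N; lia.
have eq_q := zigzag_meet_last_col lt_t lt_t' r_last (etrans (esym eq_r) r_last) E.
by rewrite /dvdn -[_.+1]addn1 -[(t' %/ _).+1]addn1 -modnDml eq_q modnDml.
Qed.

Lemma ham_path_zigzag : ham_path a b [seq zigzag a b W n' t | t <- iota 0 #|G|].
Proof. by apply: ham_path_walk => [t|]; [apply: zigzagS | apply: zigzag_inj]. Qed.

Lemma ham_path_shifted_zigzag :
  ham_path a b [seq (a - b) *+ g + zigzag b a W n' t | t <- iota 0 #|G|].
Proof.
apply: (ham_path_walk (d := fun t => ~~ zigzag_dir W n' t)) => [t|t t' lt_t lt_t' /addrI].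
  by rewrite zigzagS // addrA if_neg.
by have := zigzag_inj gen_ba index_ba; rewrite [b + a]addrC; apply.
Qed.

Lemma arc_disjoint_zigzags : a != b ->
  arc_disjoint [seq zigzag a b W n' t | t <- iota 0 #|G|]
               [seq (a - b) *+ g + zigzag b a W n' t | t <- iota 0 #|G|].
Proof.
move=> neq_ab; apply: (arc_disjoint_walks (d2 := fun t => ~~ zigzag_dir W n' t) neq_ab).
- by move=> t; apply: zigzagS.
- by move=> t; rewrite zigzagS // addrA if_neg.
by move=> t t' lt_t lt_t' /(zigzag_meet_dir lt_t lt_t') ->; case: zigzag_dir.
Qed.

End ZigzagPaths.

Theorem mainTheorem5 (G : finZmodType) (a b : G) :
  a != b -> a != 0%R -> b != 0%R ->
  (<<[set a; b]>>%g = [set: G]) ->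
  ~~ odd (#|[set: G] : <[(a - b)%R]>|)%g ->
  exists p q : seq G, [/\ ham_path a b p, ham_path a b q & arc_disjoint p q].
Proof.
move=> neq_ab _ _ gen; rewrite cycle_subrC => even_index.
have index_gt0 : (0 < #|[set: G] : <[(b - a)%R]>|%g)%N := indexg_gt0 _ _.
have index : #|[set: G] : <[b - a]>|%g = ((#|[set: G] : <[b - a]>|%g./2).-1).*2.+2 by lia.
eexists; eexists; split.
- exact: ham_path_zigzag index.
- exact: ham_path_shifted_zigzag index.
- exact: arc_disjoint_zigzags.
Qed.
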